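(* Let $X$ and $Y$ be nonnegative random variables with distribution functions $F_X,F_Y\in\mathcal{F}$, let $s\geq1$ be an integer and $\alpha_1,\alpha_2>0$. If $X\leq_{s\text{-IFR}}Y$, then $\alpha_1X\leq_{s\text{-IFR}}\alpha_2Y$.
   Context: $\mathcal{F}$ denotes the family of distribution functions $F$ with $F(0)=0$ whose probability distribution has support contained in $[0,\infty)$. For a nonnegative random variable $X$ with density $f_X$: $\overline{T}_{X,0}=f_X$, $\widetilde{\mu}_{X,0}=1$, and for $s\geq1$, $x\geq0$, $\overline{T}_{X,s}(x)=\frac{1}{\widetilde{\mu}_{X,s-1}}\int_x^\infty \overline{T}_{X,s-1}(t)\,dt$ with $\widetilde{\mu}_{X,s}=\int_0^\infty \overline{T}_{X,s}(t)\,dt$, and $\overline{T}_{X,s}(x)=1$ for $x<0$. We write $X\leq_{s\text{-IFR}}Y$ (''$X$ is more $s$-IFR than $Y$'') if $c_s(x)=\overline{T}_{Y,s}^{-1}(\overline{T}_{X,s}(x))$ is convex. *)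

From HB Require Import structures.
From mathcomp Require Import all_boot all_order all_algebra.
From mathcomp Require Import all_classical all_reals all_analysis.
Set Implicit Arguments. Unset Strict Implicit. Unset Printing Implicit Defensive.
Import Order.TTheory GRing.Theory Num.Theory.
Import numFieldNormedType.Exports.
Local Open Scope classical_set_scope.
Local Open Scope ring_scope.

Section Defs.
Context {R : realType}.
Local Notation mu := (@lebesgue_measure R).

Definition is_density d (T : measurableType d) (P : probability T R)
  (X : T -> R) (f : R -> R) : Prop :=
  [/\ measurable_fun setT X, measurable_fun setT f, (forall x, 0 <= f x) &
      forall A : set R, measurable A ->
        P (X @^-1` A) = (\int[mu]_(x in A) (f x)%:E)%E].

Fixpoint Tbar (f : R -> R) (s : nat) : R -> R :=
  match s with
  | 0 => f
  | s'.+1 => fun x => if x < 0 then 1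
             else Rintegral mu `[x, +oo[ (Tbar f s') /
                  (if s' is 0 then 1 else Rintegral mu `[0, +oo[ (Tbar f s'))
  end.

Definition mutilde (f : R -> R) (s : nat) : R :=
  if s is 0 then 1 else Rintegral mu `[0, +oo[ (Tbar f s).

(* the iterated tails up to order s are well defined: the normalizing
   integrals mutilde f k, k < s, are finite *)
Definition tails_defined (f : R -> R) (s : nat) : Prop :=
  forall k, (k < s)%N -> mu.-integrable `[0, +oo[ (fun x => (Tbar f k x)%:E).

Definition Tinv (T : R -> R) (u : R) : R := inf [set x | 0 <= x /\ T x <= u].

Definition convex_on (D : set R) (c : R -> R) : Prop :=
  forall x y t, D x -> D y -> 0 <= t <= 1 ->
    c (t * x + (1 - t) * y) <= t * c x + (1 - t) * c y.

(* X <=_{s-IFR} Y : c_s(x) = Tbar_{Y,s}^{-1}(Tbar_{X,s}(x)) is convex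
   (on the support {x >= 0 | Tbar_{X,s}(x) > 0} where it is defined) *)
Definition le_sIFR d (T : measurableType d) (P : probability T R)
  (s : nat) (X Y : T -> R) : Prop :=
  forall fX fY, is_density P X fX -> is_density P Y fY ->
    convex_on [set x | 0 <= x /\ 0 < Tbar fX s x]
              (fun x => Tinv (Tbar fY s) (Tbar fX s x)).

End Defs.

From HB Require Import structures.
From mathcomp Require Import all_boot all_order all_algebra.
From mathcomp Require Import all_classical all_reals all_analysis.
From mathcomp Require Import measurable_realfun.
Import Order.TTheory GRing.Theory Num.Theory.
Import numFieldNormedType.Exports.
Local Open Scope classical_set_scope.
Local Open Scope ring_scope.

(* Dilating a random variable by a > 0 dilates its iterated tails:
   P(aX >= x) = P(X >= x/a) settles order 1, and at each further order the
   substitution t = a u multiplies both the tail integral and its normalising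
   constant by a, so Tbar_{aX,k}(x) = Tbar_{X,k}(x/a) for k >= 1.  The
   generalised inverse of x |-> T(x/a) is a times that of T, so the
   function c_s of (a1 X, a2 Y) is x |-> a2 c_s(x/a1), which is convex
   whenever c_s is. *)

Section dilation.
Context {R : realType}.
Local Notation mu := (@lebesgue_measure R).

Lemma inf_dilation (a : R) (S : set R) : 0 < a ->
  inf [set x | S (x / a)] = a * inf S.
Proof.
move=> a0; set Sa := [set x | S (x / a)].
have has_inf_dilation (b : R) (B : set R) : 0 < b -> has_inf B ->
    has_inf [set x | B (x / b)].
  move=> b0 [[x Bx] [m mB]]; split.
    by exists (x * b); rewrite /= mulfK ?gt_eqF.
  by exists (m * b) => y /mB; rewrite ler_pdivlMr.
(* [inf_out]: a set without an infimum has [inf] equal to [0], on both sides. *)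
have [hS|hS] := pselect (has_inf S); last first.
  rewrite !inf_out ?mulr0 // => /(has_inf_dilation a^-1); apply: contra_not hS.
  rewrite invr_gt0 => /(_ a0); congr has_inf; apply/seteqP; split => y.
    by rewrite /Sa /= invrK mulfK ?gt_eqF.
  by rewrite /Sa /= invrK mulfK ?gt_eqF.
have hSa := has_inf_dilation a S a0 hS.
apply/le_anti/andP; split.
  rewrite -ler_pdivrMl //; apply: lb_le_inf; first by case: hS.
  move=> x Sx; rewrite ler_pdivrMl //; apply: (ge_inf hSa.2).
  by rewrite /Sa /= [a * x]mulrC mulfK ?gt_eqF.
apply: lb_le_inf; first by case: hSa.
by move=> y Say; rewrite -ler_pdivlMl // mulrC; apply: (ge_inf hS.2).
Qed.

Lemma measurable_dilation (a : R) :
  measurable_fun [set: R] (fun t : R => t / a).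
Proof. exact: measurable_funM. Qed.

Lemma lebesgue_measure_dilation (a : R) (A : set R) : 0 < a -> measurable A ->
  pushforward mu (fun t : R => t / a) A = (a%:E * mu A)%E.
Proof.
move=> a0 mA.
(* The measure structure of [pushforward mu _] is inferred from this proof. *)
have mdiv : measurable_fun [set: measurableTypeR R]
  ((fun t => t / a) : measurableTypeR R -> measurableTypeR R) :=
  measurable_dilation a.
have a_inv_ge0 : 0 <= a^-1 by rewrite invr_ge0 ltW.
rewrite (@lebesgue_measure_unique R (mscale (NngNum a_inv_ge0)
  (pushforward mu
    ((fun t => t / a) : measurableTypeR R -> measurableTypeR R)))) //=.
  by rewrite muleA -EFinM divff ?gt_eqF // mul1e.
move=> _ [[b c] _ <-]; rewrite /mscale /= /pushforward.
have -> : (fun t : R => t / a) @^-1` `]b, c] = `]a * b, a * c]%classic.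
  apply/seteqP; split => t /=; rewrite !in_itv /=;
  by rewrite ler_pdivrMr // ltr_pdivlMr // ![_ * a]mulrC.
rewrite !lebesgue_measure_itv /= !lte_fin ltr_pM2l //.
case: ifP => _; last by rewrite mule0.
by rewrite -EFinB -EFinM -mulrBr mulKf ?gt_eqF.
Qed.

Lemma ge0_integral_dilation (a : R) (A : set R) (h : R -> R) :
  0 < a -> measurable A -> measurable_fun A h -> (forall t, A t -> 0 <= h t) ->
  (\int[mu]_(t in [set t | A (t / a)%R]) (h (t / a)%R)%:E =
   a%:E * \int[mu]_(t in A) (h t)%:E)%E.
Proof.
move=> a0 mA mh h0.
have mdiv : measurable_fun [set: measurableTypeR R]
  ((fun t => t / a) : measurableTypeR R -> measurableTypeR R) :=
  measurable_dilation a.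
transitivity (\int[mu]_(t in (fun t => (t / a)%R) @^-1` A)
  ((fun u => (h u)%:E) \o (fun t => (t / a)%R)) t)%E; first by [].
rewrite -(ge0_integral_pushforward mdiv) //; first last.
- by move=> t /set_mem At; rewrite lee_fin h0.
- exact/measurable_EFinP.
have a_ge0 : 0 <= a by rewrite ltW.
transitivity (\int[mscale (NngNum a_ge0) mu]_(t in A) (h t)%:E)%E.
  apply: eq_measure_integral => //= B mB _.
  exact: lebesgue_measure_dilation.
by rewrite ge0_integral_mscale //; exact/measurable_EFinP.
Qed.

Lemma Rintegral_dilation (a : R) (A : set R) (h : R -> R) :
  0 < a -> measurable A -> measurable_fun A h -> (forall t, A t -> 0 <= h t) ->
  Rintegral mu [set t | A (t / a)] (fun t => h (t / a)) = a * Rintegral mu A h.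
Proof.
move=> a0 mA mh h0; rewrite /Rintegral ge0_integral_dilation //.
case: (\int[mu]_(t in A) (h t)%:E)%E => [r| |] //=.
- by rewrite gt0_muley ?lte_fin // mulr0.
- by rewrite gt0_muleNy ?lte_fin // mulr0.
Qed.

Definition normalized_tail (h : R -> R) (x : R) : R :=
  if x < 0 then 1 else Rintegral mu `[x, +oo[ h / Rintegral mu `[0, +oo[ h.

Lemma normalized_tail_dilation (a : R) (h : R -> R) : 0 < a ->
  measurable_fun `[0 : R, +oo[ h -> (forall t, 0 <= t -> 0 <= h t) ->
  normalized_tail (fun t => h (t / a)) = fun x => normalized_tail h (x / a).
Proof.
move=> a0 mh h0; apply/funext => x.
rewrite /normalized_tail pmulr_llt0 ?invr_gt0 //.
case: ltrP => // x0.
have tail_dilation z : 0 <= z ->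
    Rintegral mu `[z, +oo[ (fun t => h (t / a)) =
    a * Rintegral mu `[z / a, +oo[ h.
  move=> z0; rewrite -Rintegral_dilation //.
  - congr Rintegral; apply/seteqP; split => t /=; rewrite !in_itv /= !andbT.
      by rewrite ler_pM2r ?invr_gt0.
    by rewrite ler_pM2r ?invr_gt0.
  - apply: measurable_funS mh => // t /=; rewrite !in_itv /= !andbT.
    exact: le_trans (divr_ge0 z0 (ltW a0)).
  - move=> t /=; rewrite in_itv /= andbT => zt; apply: h0.
    exact: le_trans (divr_ge0 z0 (ltW a0)) zt.
rewrite !tail_dilation // mul0r invfM mulrACA.
by rewrite divff ?gt_eqF // mul1r.
Qed.

End dilation.

Section iterated_tails.
Context {R : realType}.
Local Notation mu := (@lebesgue_measure R).

Lemma TbarSS (f : R -> R) (k : nat) :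
  Tbar f k.+2 = normalized_tail (Tbar f k.+1).
Proof. by []. Qed.

Lemma Tbar_ge0 (f : R -> R) (k : nat) : (forall x, 0 <= f x) ->
  forall x, 0 <= Tbar f k x.
Proof.
move=> f0; elim: k => [|k IH] x //=; case: ifP => // _.
apply: divr_ge0; first by apply: Rintegral_ge0 => t _; exact: IH.
by case: k IH => // k IH; apply: Rintegral_ge0 => t _; exact: IH.
Qed.

Context {d : measure_display} {T : measurableType d} {P : probability T R}.

Lemma Tbar1_dilation {X : T -> R} {f g : R -> R} {a : R} : 0 < a ->
  is_density P X f -> is_density P (fun w => a * X w) g ->
  Tbar g 1 = fun x => Tbar f 1 (x / a).
Proof.
move=> a0 [_ _ _ dX] [_ _ _ daX]; apply/funext => x /=.
rewrite pmulr_llt0 ?invr_gt0 //; case: ifP => // _.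
rewrite !divr1 /Rintegral -daX -?dX //; congr (fine (P _)).
apply/seteqP; split => w /=;
  by rewrite !in_itv /= !andbT ler_pdivrMr // mulrC.
Qed.

Lemma Tbar_dilation {X : T -> R} {f g : R -> R} {a : R} {s : nat} : 0 < a ->
  is_density P X f -> is_density P (fun w => a * X w) g -> tails_defined f s ->
  forall k, (0 < k <= s)%N -> Tbar g k = fun x => Tbar f k (x / a).
Proof.
move=> a0 dX daX tf; elim => // -[_ _|k IH /andP[_ ks]].
  exact: Tbar1_dilation daX.
have mk : measurable_fun `[0 : R, +oo[ (Tbar f k.+1).
  by have /measurable_EFinP := measurable_int mu (tf k.+1 ks).
have [_ _ f0 _] := dX.
rewrite (TbarSS g k) (TbarSS f k) IH; last exact: ltnW.
by rewrite normalized_tail_dilation // => t _; exact: Tbar_ge0.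
Qed.

End iterated_tails.

Section generalized_inverse.
Context {R : realType}.

Lemma Tinv_dilation (a : R) (h : R -> R) : 0 < a ->
  Tinv (fun t => h (t / a)) = fun u => a * Tinv h u.
Proof.
move=> a0; apply/funext => u; rewrite /Tinv -inf_dilation //.
congr inf; apply/seteqP; split => x /= [x0 hx]; split => //.
  exact: divr_ge0 x0 (ltW a0).
by move: x0; rewrite pmulr_lge0 // invr_gt0.
Qed.

Lemma convex_onS (D D' : set R) (c : R -> R) :
  D' `<=` D -> convex_on D c -> convex_on D' c.
Proof. by move=> D'D cc x y t /D'D Dx /D'D Dy; exact: cc. Qed.

Lemma convex_on_dilation {D : set R} {c : R -> R} {a b : R} :
  0 < a -> 0 <= b -> convex_on D c ->
  convex_on [set x | D (x / a)] (fun x => b * c (x / a)).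
Proof.
move=> a0 b0 cc x y t Dx Dy t01 /=.
have -> : (t * x + (1 - t) * y) / a = t * (x / a) + (1 - t) * (y / a).
  by rewrite mulrDl !mulrA.
rewrite [t * (b * _)]mulrCA [(1 - t) * (b * _)]mulrCA -mulrDr.
exact/ler_wpM2l/cc.
Qed.

End generalized_inverse.

Theorem corollary1 (R : realType) (d : measure_display) (T : measurableType d)
  (P : probability T R) (X Y : T -> R) (fX fY : R -> R) (s : nat)
  (a1 a2 : R) :
  (forall w, 0 <= X w) -> (forall w, 0 <= Y w) ->
  P (X @^-1` `]-oo, 0]) = 0%E -> P (Y @^-1` `]-oo, 0]) = 0%E ->
  is_density P X fX -> is_density P Y fY ->
  tails_defined fX s -> tails_defined fY s ->
  (1 <= s)%N -> 0 < a1 -> 0 < a2 ->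
  le_sIFR P s X Y ->
  le_sIFR P s (fun w => a1 * X w) (fun w => a2 * Y w).
Proof.
move=> _ _ _ _ dX dY tX tY s_gt0 a1_gt0 a2_gt0 le_XY gX gY dgX dgY.
have s_in : (0 < s <= s)%N by rewrite s_gt0 leqnn.
rewrite (Tbar_dilation a1_gt0 dX dgX tX s s_in).
rewrite (Tbar_dilation a2_gt0 dY dgY tY s s_in) Tinv_dilation //.
apply: convex_onS (convex_on_dilation a1_gt0 (ltW a2_gt0) (le_XY _ _ dX dY)).
by move=> x /= [x_ge0 Tx_gt0]; split; rewrite // divr_ge0 // ltW.
Qed.
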